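(* Let $(N,\langle\cdot,\cdot\rangle)$ be a 2-step nilpotent Lie group with a left-invariant Riemannian metric whose Lie algebra $\mathfrak n$ is either non-singular or almost non-singular. Then every left-invariant skew-symmetric $(1,1)$-tensor $F$ on $N$ of type II whose associated 2-form $\omega=\langle F\cdot,\cdot\rangle$ is closed and which is parallel ($\nabla F=0$, $\nabla$ the Levi-Civita connection) is identically zero.
   Context: A real Lie algebra is 2-step nilpotent if $[[U,V],W]=0$ for all $U,V,W$. Let $\mathfrak z$ be the center, $\mathfrak v=\mathfrak z^\perp$, and for $Z\in\mathfrak z$ define $j_Z:\mathfrak v\to\mathfrak v$ by $\langle j_ZV,W\rangle=\langle Z,[V,W]\rangle$. $\mathfrak n$ is non-singular if $j_Z$ is invertible for every nonzero $Z\in\mathfrak z$; it is almost non-singular if there exist $Z,\tilde Z\in\mathfrak z$ with $j_Z$ invertible and $j_{\tilde Z}$ singular. $F$ (identified with a skew-symmetric endomorphism of $\mathfrak n$) is of type II if $F(\mathfrak v)\subseteq\mathfrak z$ and $F(\mathfrak z)\subseteq\mathfrak v$. Closedness of a left-invariant 2-form means $\omega([U,V],W)+\omega([V,W],U)+\omega([W,U],V)=0$ for all $U,V,W\in\mathfrak n$. *)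

From mathcomp Require Import all_boot all_algebra.
From mathcomp Require Export reals.
Set Implicit Arguments. Unset Strict Implicit. Unset Printing Implicit Defensive.
Import GRing.Theory Num.Theory.
Local Open Scope ring_scope.

(* A metric Lie algebra (n, <.,.>) of dimension d is modelled, up to isometry,
   as 'rV[R]_d with the standard inner product and a Lie bracket br. *)

Definition ip {R : realType} {d : nat} (u v : 'rV[R]_d) : R := (u *m v^T) 0 0.

Definition is_lie_bracket {R : realType} {d : nat}
  (br : 'rV[R]_d -> 'rV[R]_d -> 'rV[R]_d) : Prop :=
  (forall (a : R) u v w, br (a *: u + v) w = a *: br u w + br v w) /\
  (forall u v, br u v = - br v u) /\
  (forall u v w, br u (br v w) + br v (br w u) + br w (br u v) = 0).

Definition two_step {R : realType} {d : nat} (br : 'rV[R]_d -> 'rV[R]_d -> 'rV[R]_d) :=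
  forall u v w, br (br u v) w = 0.

Definition center {R : realType} {d : nat} (br : 'rV[R]_d -> 'rV[R]_d -> 'rV[R]_d)
  (z : 'rV[R]_d) : Prop := forall u, br z u = 0.

Definition vpart {R : realType} {d : nat} (br : 'rV[R]_d -> 'rV[R]_d -> 'rV[R]_d)
  (x : 'rV[R]_d) : Prop := forall z, center br z -> ip x z = 0.

Definition is_j {R : realType} {d : nat} (br : 'rV[R]_d -> 'rV[R]_d -> 'rV[R]_d)
  (j : 'rV[R]_d -> 'rV[R]_d -> 'rV[R]_d) : Prop :=
  forall Z V, center br Z -> vpart br V ->
    vpart br (j Z V) /\ (forall W, vpart br W -> ip (j Z V) W = ip Z (br V W)).

Definition invertible_on {R : realType} {d : nat} (P : 'rV[R]_d -> Prop)
  (f : 'rV[R]_d -> 'rV[R]_d) : Prop :=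
  (forall x, P x -> P (f x)) /\
  (forall x y, P x -> P y -> f x = f y -> x = y) /\
  (forall y, P y -> exists2 x, P x & f x = y).

Definition nonsingular {R : realType} {d : nat} (br : 'rV[R]_d -> 'rV[R]_d -> 'rV[R]_d)
  (j : 'rV[R]_d -> 'rV[R]_d -> 'rV[R]_d) : Prop :=
  forall Z, center br Z -> Z <> 0 -> invertible_on (vpart br) (j Z).

Definition almost_nonsingular {R : realType} {d : nat}
  (br : 'rV[R]_d -> 'rV[R]_d -> 'rV[R]_d) (j : 'rV[R]_d -> 'rV[R]_d -> 'rV[R]_d) : Prop :=
  (exists Z, center br Z /\ invertible_on (vpart br) (j Z)) /\
  (exists Z', center br Z' /\ ~ invertible_on (vpart br) (j Z')).

(* endomorphisms act on row vectors on the right: F(u) = u *m F *)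
Definition skew_sym {R : realType} {d : nat} (F : 'M[R]_d) : Prop :=
  forall u v, ip (u *m F) v = - ip u (v *m F).

Definition typeII {R : realType} {d : nat} (br : 'rV[R]_d -> 'rV[R]_d -> 'rV[R]_d)
  (F : 'M[R]_d) : Prop :=
  (forall V, vpart br V -> center br (V *m F)) /\
  (forall Z, center br Z -> vpart br (Z *m F)).

Definition omega {R : realType} {d : nat} (F : 'M[R]_d) (u v : 'rV[R]_d) : R :=
  ip (u *m F) v.

Definition closed_form {R : realType} {d : nat} (br : 'rV[R]_d -> 'rV[R]_d -> 'rV[R]_d)
  (F : 'M[R]_d) : Prop :=
  forall U V W, omega F (br U V) W + omega F (br V W) U + omega F (br W U) V = 0.

(* Koszul formula for left-invariant fields: koszul X Y Z = <nabla_X Y, Z> *)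
Definition koszul {R : realType} {d : nat} (br : 'rV[R]_d -> 'rV[R]_d -> 'rV[R]_d)
  (X Y Z : 'rV[R]_d) : R :=
  (ip (br X Y) Z - ip (br Y Z) X + ip (br Z X) Y) / 2%:R.

(* nabla F = 0 : <nabla_X (F Y), Z> = <F (nabla_X Y), Z> = <nabla_X Y, F^* Z>,
   where the adjoint F^* of u |-> u *m F is u |-> u *m F^T *)
Definition parallel {R : realType} {d : nat} (br : 'rV[R]_d -> 'rV[R]_d -> 'rV[R]_d)
  (F : 'M[R]_d) : Prop :=
  forall X Y Z, koszul br X (Y *m F) Z = koszul br X Y (Z *m F^T).

From mathcomp Require Import all_boot all_algebra.
From mathcomp Require Import reals.
Set Implicit Arguments. Unset Strict Implicit. Unset Printing Implicit Defensive.
Import GRing.Theory Num.Theory.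
Local Open Scope ring_scope.

(* With a central first argument Z the Koszul formula reduces to
   <nabla_Z A, B> = -<[A, B], Z>/2, so parallelism gives
   <[Y F, W], Z> = <[Y, W F^*], Z>, which vanishes when W is central.
   Parallelism along any X, applied to a central Z and to W = [X, Z F]
   (central since n is 2-step), then yields |[X, Z F]|^2 = 0: F maps the
   center z into itself. Type II sends z into v = z^perp, so F vanishes on z;
   by skew-symmetry F then takes values in v, so F^2 takes values in
   z ∩ v = 0, and a skew-symmetric F with F^2 = 0 is zero. *)

Section InnerProduct.
Variables (R : realType) (d : nat).
Implicit Types (u v x : 'rV[R]_d) (F : 'M[R]_d).

Lemma ipC u v : ip u v = ip v u.
Proof. by rewrite /ip -[u *m v^T]trmxK trmx_mul trmxK mxE. Qed.

Lemma ipNl u v : ip (- u) v = - ip u v.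
Proof. by rewrite /ip mulNmx mxE. Qed.

Lemma ip0l v : ip 0 v = 0.
Proof. by rewrite /ip mul0mx mxE. Qed.

Lemma ip0r u : ip u 0 = 0.
Proof. by rewrite ipC ip0l. Qed.

Lemma ip_self_eq0 x : ip x x = 0 -> x = 0.
Proof.
rewrite /ip mxE => xx0; apply/rowP => k; rewrite mxE.
have sq0 : \sum_(i < d) x 0 i ^+ 2 = 0.
  by rewrite -[RHS]xx0; apply: eq_bigr => i _; rewrite mxE.
by apply/eqP; rewrite -sqrf_eq0; apply/eqP/(psumr_eq0P _ sq0) => // i _; rewrite sqr_ge0.
Qed.

Lemma skew_sym_sqr_eq0 F : skew_sym F -> F *m F = 0 -> F = 0.
Proof.
move=> skewF FF0; apply/row_matrixP => i; rewrite row0 rowE.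
by apply: ip_self_eq0; rewrite skewF -mulmxA FF0 mulmx0 ip0r oppr0.
Qed.

End InnerProduct.

Section ParallelTwoStep.
Variables (R : realType) (d : nat) (br : 'rV[R]_d -> 'rV[R]_d -> 'rV[R]_d).
Hypothesis brN : forall u v, br u v = - br v u.
Hypothesis br2 : two_step br.
Implicit Types (u v x X Y Z W A B : 'rV[R]_d).

Lemma br_center_r u Z : center br Z -> br u Z = 0.
Proof. by move=> cZ; rewrite brN cZ oppr0. Qed.

Lemma vpart_center_eq0 x : vpart br x -> center br x -> x = 0.
Proof. by move=> vx cx; apply: ip_self_eq0; apply: vx. Qed.

Let half_inj (a b : R) : a / 2%:R = b / 2%:R -> a = b.
Proof. by apply: mulIf; rewrite invr_eq0 pnatr_eq0. Qed.

Lemma koszul_center Z A B :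
  center br Z -> koszul br Z A B = - ip (br A B) Z / 2%:R.
Proof. by move=> cZ; rewrite /koszul cZ (br_center_r _ cZ) !ip0l sub0r addr0. Qed.

Variable F : 'M[R]_d.
Hypothesis parF : parallel br F.

Lemma parallel_br_center Y W Z :
  center br W -> center br Z -> ip (br Y (W *m F^T)) Z = 0.
Proof.
move=> cW cZ; have := parF Z Y W; rewrite !koszul_center //.
by move=> /half_inj /oppr_inj; rewrite br_center_r // ip0l.
Qed.

Lemma parallel_center_mulF Z : center br Z -> center br (Z *m F).
Proof.
move=> cZ X; rewrite brN; set W := br X (Z *m F).
suff -> : W = 0 by rewrite oppr0.
have cW : center br W by move=> u; apply: br2.
have := parF X Z W; rewrite /koszul.
rewrite (br_center_r _ cW) cW (br_center_r _ cZ) cZ (brN (W *m F^T)) ipNl.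
rewrite parallel_br_center //.
by rewrite !ip0l !subr0 !addr0 => /half_inj /ip_self_eq0.
Qed.

End ParallelTwoStep.

Theorem mainTheorem6 (R : realType) (d : nat)
  (br : 'rV[R]_d -> 'rV[R]_d -> 'rV[R]_d) (j : 'rV[R]_d -> 'rV[R]_d -> 'rV[R]_d)
  (F : 'M[R]_d) :
  is_lie_bracket br -> two_step br -> is_j br j ->
  (nonsingular br j \/ almost_nonsingular br j) ->
  skew_sym F -> typeII br F -> closed_form br F -> parallel br F ->
  F = 0.
Proof.
move=> [_ [brN _]] br2 _ _ skewF [FvZ FzV] _ parF.
have Fz0 Z : center br Z -> Z *m F = 0.
  move=> cZ; apply: (vpart_center_eq0 (FzV _ cZ)).
  exact: parallel_center_mulF.
have Fv u : vpart br (u *m F).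
  by move=> Z cZ; rewrite skewF Fz0 // ip0r oppr0.
apply: skew_sym_sqr_eq0 => //; apply/row_matrixP => i.
by rewrite row0 rowE mulmxA; apply: vpart_center_eq0 (Fv _) (FvZ _ (Fv _)).
Qed.
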